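(* Let $T=(p,q:F\to E)$ be an LR textile system whose associated 2-graph $\Lambda=\Lambda_T$ is row-finite and essential. Let $\mathcal G=\{\mathcal G^i_z: z\in\Lambda^0,\ 1\le i\le m(z)\}$ be a 2-graph insplitting partition of $\Lambda$, let $\Lambda_I$ be the resulting insplit 2-graph, and let $T_I=T_{\Lambda_I}$ be its associated textile system. Then there are textile systems $T_A,T_B,T_C,T_D$ such that $T_A$ is a textile (Johnson--Madden) insplit of $T$, $T_B=\widehat{T_A}$, $T_C$ is a textile insplit of $T_B$, and $T_D=\widehat{T_C}$, and such that, after a bijective relabeling of alphabets, the shift spaces $\mathsf X^+_{T_D}$ and $\mathsf X^+_{T_I}$ coincide (i.e. $T_D$ and $T_I$ give rise to identical tilings of $\mathbb R_{\ge 0}^2$). In particular $\mathsf X^+_{T}$ and $\mathsf X^+_{T_I}$ are conjugate, so 2-graph insplitting induces a conjugacy of the associated one-sided 2-dimensional shifts of finite type.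
   Context: $\mathbb N=\{0,1,2,\dots\}$; $\varepsilon_1,\varepsilon_2$ are the standard generators of $\mathbb N^2$. A directed graph $E=(E^0,E^1,r,s)$ has vertices $E^0$, edges $E^1$, range and source maps $r,s:E^1\to E^0$; for $v\in E^0$, $vE^1=r^{-1}(v)$. A graph homomorphism $p:F\to E$ is a pair of maps $F^0\to E^0$, $F^1\to E^1$ (both written $p$) with $r(p(f))=p(r(f))$, $s(p(f))=p(s(f))$. A textile system $T=(p,q:F\to E)$ consists of directed graphs $F,E$ and graph homomorphisms $p,q:F\to E$ such that $f\mapsto(r(f),p(f),s(f),q(f))$ is injective on $F^1$. $p$ has unique $r$-path lifting if for all $v\in F^0$, $e\in E^1$ with $p(v)=r(e)$ there is exactly one $f\in F^1$ with $r(f)=v$, $p(f)=e$; unique $s$-path lifting is defined analogously with $s$. $T$ is LR if $p$ has unique $r$-path lifting and $q$ has unique $s$-path lifting. Shift space: $\mathsf X^+_T=\{x:\mathbb N^2\to F^1 : s(x_n)=r(x_{n+\varepsilon_1}),\ p(x_n)=q(x_{n+\varepsilon_2})\ \forall n\in\mathbb N^2\}$ with the product topology ($F^1$ discrete) and shift action $(\sigma^m x)_n=x_{n+m}$, $m\in\mathbb N^2$. Two such spaces are conjugate if there is a homeomorphism $h$ between them with $h\circ\sigma^m=\sigma^m\circ h$ for all $m\in\mathbb N^2$. Directed-graph insplitting: given, for each $v\in F^0$, a partition of $vF^1$ into nonempty sets $\mathcal F_v^1,\dots,\mathcal F_v^{m(v)}$, the insplit graph $F_I$ has $F_I^0=\{v^i: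 v\in F^0, 1\le i\le m(v)\}$, $F_I^1=\{f^j: f\in F^1, 1\le j\le m(s(f))\}$, $s(f^j)=s(f)^j$, and $r(f^j)=r(f)^k$ where $f\in\mathcal F^k_{r(f)}$. Textile (Johnson--Madden) insplit of $T$: $T_I=(p_I,q_I:F_I\to E)$ with $p_I(v^i)=p(v)$, $p_I(f^j)=p(f)$, and likewise for $q_I$. Inverted textile system: for $T=(p,q:F\to E)$, $\widehat T=(\hat p,\hat q:\widehat F\to\widehat E)$ where $\widehat E$ has vertices $E^0$, edges $F^0$, range $q|_{F^0}$ and source $p|_{F^0}$; $\widehat F$ has vertices $E^1$, edges $F^1$, range $q|_{F^1}$, source $p|_{F^1}$; $\hat p=(s_E,s_F)$, $\hat q=(r_E,r_F)$. 2-graphs: a 2-graph is a countable category $\Lambda$ with a functor $d:\Lambda\to\mathbb N^2$ such that whenever $d(\lambda)=m+n$ there are unique $\mu,\nu$ with $d(\mu)=m,d(\nu)=n,\lambda=\mu\nu$ (composition $\mu\nu$ defined when $s(\mu)=r(\nu)$). $\Lambda^m=d^{-1}(m)$, $\Lambda^0$ = vertices, $\Lambda^1=\Lambda^{\varepsilon_1}\sqcup\Lambda^{\varepsilon_2}$ (edges of color 1 and 2); $\lambda(m,n)$ denotes the unique factor of degree $n-m$ in position $[m,n]$. Row-finite: $v\Lambda^m$ finite; essential: $v\Lambda^m$ and $\Lambda^m v$ nonempty for all $v,m$. Any 2-graph is the quotient of the path category of its 1-skeleton (2-colored graph $(\Lambda^0,\Lambda^1,r,s)$) by the relation identifying $fg\sim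 g'f'$ when they are the same element of $\Lambda^{\varepsilon_1+\varepsilon_2}$ (commuting squares). The 2-graph $\Lambda_T$ of a textile system: 2-colored graph with vertices $E^0$, color-1 edges $E^1$ (with $r,s$ from $E$) and color-2 edges $F^0$ with $r(w)=q(w)$, $s(w)=p(w)$; commuting squares $ve\sim e'w$ iff there is $f\in F^1$ with $r(f)=v,s(f)=w,p(f)=e,q(f)=e'$; $\Lambda_T$ is the quotient of the path category by the equivalence generated by these squares (compatible with concatenation). For LR $T$ this is a 2-graph, with $\Lambda_T^{\varepsilon_1+\varepsilon_2}$ identified with $F^1$. Conversely, the textile system of a 2-graph $\Lambda$ is $T_\Lambda=(p,q:F_\Lambda\to E_\Lambda)$ with $E_\Lambda=(\Lambda^0,\Lambda^{\varepsilon_1},r,s)$, $F_\Lambda=(\Lambda^{\varepsilon_2},\Lambda^{\varepsilon_1+\varepsilon_2},\lambda\mapsto\lambda(0,\varepsilon_2),\lambda\mapsto\lambda(\varepsilon_1,\varepsilon_1+\varepsilon_2))$, $p(\lambda)=\lambda(\varepsilon_2,\varepsilon_1+\varepsilon_2)$, $q(\lambda)=\lambda(0,\varepsilon_1)$, and on $F_\Lambda^0=\Lambda^{\varepsilon_2}$, $p=s$, $q=r$. 2-graph insplitting: an insplitting partition of $\Lambda$ is, for each $z\in\Lambda^0$, a partition of $z\Lambda^1$ (edges of either color with range $z$) into nonempty sets $\mathcal G^1_z,\dots,\mathcal G^{m(z)}_z$ satisfying the pairing condition: for every $\lambda\in\Lambda^{\varepsilon_1+\varepsilon_2}$, $\lambda(0,\varepsilon_1)$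 and $\lambda(0,\varepsilon_2)$ lie in the same set $\mathcal G^j_{r(\lambda)}$. The insplit 2-graph $\Lambda_I$ is the quotient of the path category of the 2-colored graph with vertices $\{z^i:1\le i\le m(z)\}$, edges $\{f^i: f\in\Lambda^1, 1\le i\le m(s(f))\}$, $d(f^i)=d(f)$, $s(f^i)=s(f)^i$, $r(f^i)=r(f)^j$ where $f\in\mathcal G^j_{r(f)}$, by the commuting squares $f^ig^k\sim_I a^jb^k$ iff $g\in\mathcal G^i_{s(f)}$, $b\in\mathcal G^j_{s(a)}$ and $fg\sim ab$ in $\Lambda$. *)

From Stdlib Require List.
From mathcomp Require Import all_boot.
Set Implicit Arguments. Unset Strict Implicit. Unset Printing Implicit Defensive.

Record graph := Graph { gV : Type; gE : Type; gr : gE -> gV; gs : gE -> gV }.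

Definition is_hom (F E : graph) (fV : gV F -> gV E) (fE : gE F -> gE E) : Prop :=
  forall f, gr (fE f) = fV (gr f) /\ gs (fE f) = fV (gs f).

Record textile := Textile {
  tF : graph; tE : graph;
  pV : gV tF -> gV tE; pE : gE tF -> gE tE;
  qV : gV tF -> gV tE; qE : gE tF -> gE tE }.

Definition textile_system (T : textile) : Prop :=
  is_hom (@pV T) (@pE T) /\ is_hom (@qV T) (@qE T) /\
  (forall f g : gE (tF T), gr f = gr g -> @pE T f = @pE T g ->
      gs f = gs g -> @qE T f = @qE T g -> f = g).

Definition unique_r_lifting (F E : graph) (fV : gV F -> gV E) (fE : gE F -> gE E) :=
  forall (v : gV F) (e : gE E), fV v = gr e -> exists! f : gE F, gr f = v /\ fE f = e.
Definition unique_s_lifting (F E : graph) (fV : gV F -> gV E) (fE : gE F -> gE E) :=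
  forall (v : gV F) (e : gE E), fV v = gs e -> exists! f : gE F, gs f = v /\ fE f = e.

Definition LR (T : textile) : Prop :=
  unique_r_lifting (@pV T) (@pE T) /\ unique_s_lifting (@qV T) (@qE T).

Definition addN2 (m n : nat * nat) : nat * nat := (m.1 + n.1, m.2 + n.2)%N.

Definition in_shift (T : textile) (x : nat * nat -> gE (tF T)) : Prop :=
  forall n : nat * nat,
    gs (x n) = gr (x (addN2 n (1, 0)%N)) /\ @pE T (x n) = @qE T (x (addN2 n (0, 1)%N)).

(* Continuity for the (subspace topology of the) product topology with
   discrete alphabets: each output coordinate is determined, near x, by
   finitely many input coordinates (those in some box [0,M]^2). *)
Definition contX (A B : Type) (PA : (nat * nat -> A) -> Prop)
    (PB : (nat * nat -> B) -> Prop) (h : {x | PA x} -> {y | PB y}) : Prop :=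
  forall (x : {x | PA x}) (n : nat * nat), exists M : nat,
    forall y : {x | PA x},
      (forall k : nat * nat, (k.1 <= M)%N -> (k.2 <= M)%N -> proj1_sig y k = proj1_sig x k) ->
      proj1_sig (h y) n = proj1_sig (h x) n.

(* X^+_{T1} and X^+_{T2} are conjugate: a homeomorphism h (inverse g)
   with h o sigma^m = sigma^m o h for all m in N^2. *)
Definition conjugate (T1 T2 : textile) : Prop :=
  exists (h : {x | @in_shift T1 x} -> {y | @in_shift T2 y})
         (g : {y | @in_shift T2 y} -> {x | @in_shift T1 x}),
    (forall x n, proj1_sig (g (h x)) n = proj1_sig x n) /\
    (forall y n, proj1_sig (h (g y)) n = proj1_sig y n) /\
    contX h /\ contX g /\
    (forall (m : nat * nat) (x x' : {x | @in_shift T1 x}),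
        (forall n, proj1_sig x' n = proj1_sig x (addN2 n m)) ->
        forall n, proj1_sig (h x') n = proj1_sig (h x) (addN2 n m)).

(* Indices are 0-based: the sets F_v^1..F_v^{m(v)} are indexed by       *)
(* i < m v, and f lies in the block dpc f.                              *)
Record dg_part (G : graph) := DgPart {
  dpm : gV G -> nat;
  dpc : gE G -> nat;
  dpc_lt : forall f, (dpc f < dpm (gr f))%N;
  dp_nonempty : forall v i, (i < dpm v)%N -> exists f, gr f = v /\ dpc f = i }.

Definition insplit_graph (G : graph) (P : dg_part G) : graph :=
  {| gV := {vi : gV G * nat | (vi.2 < dpm P vi.1)%N};
     gE := {fj : gE G * nat | (fj.2 < dpm P (gs fj.1))%N};
     gr := fun fj => exist (fun vi : gV G * nat => (vi.2 < dpm P vi.1)%N)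
                       (gr (proj1_sig fj).1, dpc P (proj1_sig fj).1)
                       (dpc_lt P (proj1_sig fj).1);
     gs := fun fj => exist (fun vi : gV G * nat => (vi.2 < dpm P vi.1)%N)
                       (gs (proj1_sig fj).1, (proj1_sig fj).2)
                       (proj2_sig fj) |}.

Definition tinsplit (T : textile) (P : dg_part (tF T)) : textile :=
  {| tF := insplit_graph P; tE := tE T;
     pV := fun vi => @pV T (proj1_sig vi).1; pE := fun fj => @pE T (proj1_sig fj).1;
     qV := fun vi => @qV T (proj1_sig vi).1; qE := fun fj => @qE T (proj1_sig fj).1 |}.

Definition hat (T : textile) : textile :=
  {| tF := {| gV := gE (tE T); gE := gE (tF T); gr := @qE T; gs := @pE T |};
     tE := {| gV := gV (tE T); gE := gV (tF T); gr := @qV T; gs := @pV T |};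
     pV := @gs (tE T); pE := @gs (tF T);
     qV := @gr (tE T); qE := @gr (tF T) |}.

(* 2-graphs, presented by their 2-coloured 1-skeleton together with    *)
(* the commuting squares.  sq a b c d means the          *)
(* colour-(1,2) path a b (a colour 1, b colour 2) and the colour-(2,1)  *)
(* path c d (c colour 2, d colour 1) are the same element of degree     *)
(* e1+e2.                                                                *)
Record tgraph := TGraph {
  L0 : Type; L1 : Type; L2 : Type;
  r1 : L1 -> L0; s1 : L1 -> L0;
  r2 : L2 -> L0; s2 : L2 -> L0;
  sq : L1 -> L2 -> L2 -> L1 -> Prop }.

(* Lambda^{e1+e2}: one element per commuting square. *)
Definition L11 (L : tgraph) : Type :=
  {t : L1 L * L2 L * L2 L * L1 L | sq t.1.1.1 t.1.1.2 t.1.2 t.2}.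
Definition l01 L (t : L11 L) : L1 L := (proj1_sig t).1.1.1. (* lambda(0,e1) *)
Definition l12 L (t : L11 L) : L2 L := (proj1_sig t).1.1.2. (* lambda(e1,e1+e2) *)
Definition l02 L (t : L11 L) : L2 L := (proj1_sig t).1.2.   (* lambda(0,e2) *)
Definition l21 L (t : L11 L) : L1 L := (proj1_sig t).2.     (* lambda(e2,e1+e2) *)

Definition row_finite (L : tgraph) : Prop :=
  forall z : L0 L,
    (exists l : seq (L1 L), forall e, r1 e = z -> List.In e l) /\
    (exists l : seq (L2 L), forall g, r2 g = z -> List.In g l).
Definition essential (L : tgraph) : Prop :=
  forall z : L0 L,
    (exists e, r1 e = z) /\ (exists e, s1 e = z) /\
    (exists g, r2 g = z) /\ (exists g, s2 g = z).

Definition Lam (T : textile) : tgraph :=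
  {| L0 := gV (tE T); L1 := gE (tE T); L2 := gV (tF T);
     r1 := @gr (tE T); s1 := @gs (tE T); r2 := @qV T; s2 := @pV T;
     sq := fun e' w v e => exists f : gE (tF T),
             gr f = v /\ gs f = w /\ @pE T f = e /\ @qE T f = e' |}.

Definition T_of (L : tgraph) : textile :=
  {| tE := {| gV := L0 L; gE := L1 L; gr := @r1 L; gs := @s1 L |};
     tF := {| gV := L2 L; gE := L11 L; gr := @l02 L; gs := @l12 L |};
     pV := @s2 L; pE := @l21 L;
     qV := @r2 L; qE := @l01 L |}.

(* 2-graph insplitting partitions (0-based block indices; an edge of
   colour 1 (resp. 2) lies in block tc1 f (resp. tc2 g) of z Lambda^1). *)
Record tg_part (L : tgraph) := TgPart {
  tm : L0 L -> nat;
  tc1 : L1 L -> nat;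
  tc2 : L2 L -> nat;
  tc1_lt : forall f, (tc1 f < tm (r1 f))%N;
  tc2_lt : forall g, (tc2 g < tm (r2 g))%N;
  tp_nonempty : forall z j, (j < tm z)%N ->
      (exists f, r1 f = z /\ tc1 f = j) \/ (exists g, r2 g = z /\ tc2 g = j);
  tp_pairing : forall t : L11 L, tc1 (l01 t) = tc2 (l02 t) }.

Definition insplit2 (L : tgraph) (P : tg_part L) : tgraph :=
  {| L0 := {zi : L0 L * nat | (zi.2 < tm P zi.1)%N};
     L1 := {fi : L1 L * nat | (fi.2 < tm P (s1 fi.1))%N};
     L2 := {gi : L2 L * nat | (gi.2 < tm P (s2 gi.1))%N};
     r1 := fun fi => exist (fun zi : L0 L * nat => (zi.2 < tm P zi.1)%N)
                       (r1 (proj1_sig fi).1, tc1 P (proj1_sig fi).1)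
                       (tc1_lt P (proj1_sig fi).1);
     s1 := fun fi => exist (fun zi : L0 L * nat => (zi.2 < tm P zi.1)%N)
                       (s1 (proj1_sig fi).1, (proj1_sig fi).2) (proj2_sig fi);
     r2 := fun gi => exist (fun zi : L0 L * nat => (zi.2 < tm P zi.1)%N)
                       (r2 (proj1_sig gi).1, tc2 P (proj1_sig gi).1)
                       (tc2_lt P (proj1_sig gi).1);
     s2 := fun gi => exist (fun zi : L0 L * nat => (zi.2 < tm P zi.1)%N)
                       (s2 (proj1_sig gi).1, (proj1_sig gi).2) (proj2_sig gi);
     sq := fun fi gk aj bk' =>
       let: (f, i) := proj1_sig fi in let: (g, k) := proj1_sig gk in
       let: (a, j) := proj1_sig aj in let: (b, k') := proj1_sig bk' in
       k = k' /\ (r2 g = s1 f /\ tc2 P g = i) /\ (r1 b = s2 a /\ tc1 P b = j) /\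
       sq f g a b |}.

From mathcomp Require Import all_boot zify.
From Stdlib Require Import ProofIrrelevance ClassicalEpsilon.
Set Implicit Arguments. Unset Strict Implicit. Unset Printing Implicit Defensive.

(* An element of the insplit 2-graph of degree e1+e2 is determined by its
   underlying square f of F^1 and the index k of its source vertex: the pairing
   condition forces the indices of its other three vertices.  Hence a tiling for
   the insplit 2-graph is a tiling for T decorated with indices k_n, and k_n is
   recovered from the tiling for T at position n + (1,1); forgetting the indices
   is a conjugacy with a sliding-block inverse.  On the textile side, T_C splits
   each colour-1 edge e according to the block of the source of the square above
   it, so the edge alphabet of the inverse of T_C is again the set of pairs
   (f, k).  Only edge alphabets are compared. *)

Lemma textile_system_hat T : textile_system T -> textile_system (hat T).
Proof.
case=> [Hp [Hq Hinj]]; split; [|split] => [f|f|f g *] /=.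
- by have [_ ->] := Hp f; have [_ ->] := Hq f.
- by have [-> _] := Hp f; have [-> _] := Hq f.
- exact: Hinj.
Qed.

Lemma textile_system_tinsplit T (P : dg_part (tF T)) :
  textile_system T -> textile_system (tinsplit P).
Proof.
case=> [Hp [Hq Hinj]]; split; [|split].
- by move=> [[f i] hi] /=; have [-> ->] := Hp f.
- by move=> [[f i] hi] /=; have [-> ->] := Hq f.
- move=> [[f i] hi] [[g j] hj] /= /(congr1 val) [er _] ep /(congr1 val) [es ei] eq.
  by apply: val_inj; rewrite /= (Hinj f g er ep es eq) ei.
Qed.

Lemma addN2AC n a b : addN2 (addN2 n a) b = addN2 (addN2 n b) a.
Proof. by case: n a b => [n1 n2] [a1 a2] [b1 b2]; rewrite /addN2 /= (addnAC n1) (addnAC n2). Qed.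

Lemma LR_essential_in_nonempty T (HLR : LR T) (Hess : essential (Lam T)) :
  forall v : gV (tF T), exists f, gr f = v.
Proof.
move=> v; have [[e He] _] := Hess (pV v).
by have [f [[? _] _]] := proj1 HLR v e (esym He); exists f.
Qed.

Definition trivial_part (G : graph) (Hne : forall v, exists e : gE G, gr e = v) : dg_part G.
Proof.
refine (@DgPart G (fun _ => 1) (fun _ => 0) (fun _ => isT) _).
by move=> v i; rewrite ltnS leqn0 => /eqP ->; have [e <-] := Hne v; exists e.
Defined.

Section InsplitSquares.
Variables (T : textile) (P : tg_part (Lam T)).
Hypothesis HT : textile_system T.

Lemma r_pE (f : gE (tF T)) : gr (pE f) = pV (gr f). Proof. by have [/(_ f) []] := HT. Qed.
Lemma s_pE (f : gE (tF T)) : gs (pE f) = pV (gs f). Proof. by have [/(_ f) []] := HT. Qed.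
Lemma r_qE (f : gE (tF T)) : gr (qE f) = qV (gr f). Proof. by have [_ [/(_ f) []]] := HT. Qed.
Lemma s_qE (f : gE (tF T)) : gs (qE f) = qV (gs f). Proof. by have [_ [/(_ f) []]] := HT. Qed.

Definition lam_square (f : gE (tF T)) : L11 (Lam T) :=
  exist _ (qE f, gs f, gr f, pE f) (ex_intro _ f (conj erefl (conj erefl (conj erefl erefl)))).

Lemma tc1_qE (f : gE (tF T)) : tc1 P (qE f) = tc2 P (gr f).
Proof. exact: tp_pairing P (lam_square f). Qed.

Lemma tc2_s_lt (f : gE (tF T)) : tc2 P (gs f) < tm P (gs (qE f)).
Proof. rewrite s_qE; exact: tc2_lt. Qed.

Lemma tc1_pE_lt (f : gE (tF T)) : tc1 P (pE f) < tm P (pV (gr f)).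
Proof. rewrite -r_pE; exact: tc1_lt. Qed.

Lemma ltn_tm_s_pE (f : gE (tF T)) k : k < tm P (gs (pE f)) -> k < tm P (pV (gs f)).
Proof. by rewrite s_pE. Qed.

Definition lift_square (f : gE (tF T)) k (hk : k < tm P (gs (pE f))) : L11 (insplit2 P).
Proof.
refine (exist _ (exist _ (qE f, tc2 P (gs f)) (tc2_s_lt f),
                 exist _ (gs f, k) (ltn_tm_s_pE hk),
                 exist _ (gr f, tc1 P (pE f)) (tc1_pE_lt f),
                 exist _ (pE f, k) hk) _).
by do !split; [exact: esym (s_qE f) | exact: r_pE | exists f].
Defined.

Lemma insplit_square_indices (t : L11 (insplit2 P)) :
  [/\ (val (l12 t)).2 = (val (l21 t)).2, (val (l01 t)).2 = tc2 P (val (l12 t)).1 &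
      (val (l02 t)).2 = tc1 P (val (l21 t)).1].
Proof. by case: t => [[[[[[a i] ?] [[g k] ?]] [[v j] ?]] [[e k'] ?]] /= [-> [[_ ->] [[_ ->] _]]]]. Qed.

Lemma insplit_square_has_base (t : L11 (insplit2 P)) :
  exists f : gE (tF T), [/\ qE f = (val (l01 t)).1, gs f = (val (l12 t)).1,
                           gr f = (val (l02 t)).1 & pE f = (val (l21 t)).1].
Proof.
case: t => [[[[[[a i] ?] [[g k] ?]] [[v j] ?]] [[e k'] ?]] /= [_ [_ [_ [f [? [? [? ?]]]]]]]].
by exists f.
Qed.

Definition square_base (t : L11 (insplit2 P)) : gE (tF T) :=
  proj1_sig (constructive_indefinite_description _ (insplit_square_has_base t)).

Definition square_index (t : L11 (insplit2 P)) : nat := (val (l21 t)).2.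

Lemma square_decomp (t : L11 (insplit2 P)) :
  [/\ val (l01 t) = (qE (square_base t), tc2 P (gs (square_base t))),
      val (l12 t) = (gs (square_base t), square_index t),
      val (l02 t) = (gr (square_base t), tc1 P (pE (square_base t))) &
      val (l21 t) = (pE (square_base t), square_index t)].
Proof.
have [e12 e01 e02] := insplit_square_indices t.
rewrite /square_base /square_index.
case: constructive_indefinite_description => f /= [-> -> -> ->].
by split; apply: injective_projections.
Qed.

Lemma square_index_lt (t : L11 (insplit2 P)) :
  square_index t < tm P (gs (pE (square_base t))).
Proof. by have [_ _ _ d] := square_decomp t; move: (valP (l21 t)); rewrite d. Qed.

Lemma square_ext (t t' : L11 (insplit2 P)) :
  square_base t = square_base t' -> square_index t = square_index t' -> t = t'.
Proof.
move=> eb ei; have [d01 d12 d02 d21] := square_decomp t.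
have [d01' d12' d02' d21'] := square_decomp t'.
rewrite -eb -ei in d01' d12' d02' d21'.
have e01 : l01 t = l01 t' by apply: val_inj; rewrite /= d01 d01'.
have e12 : l12 t = l12 t' by apply: val_inj; rewrite /= d12 d12'.
have e02 : l02 t = l02 t' by apply: val_inj; rewrite /= d02 d02'.
have e21 : l21 t = l21 t' by apply: val_inj; rewrite /= d21 d21'.
move: t t' e01 e12 e02 e21 {eb ei d01 d12 d02 d21 d01' d12' d02' d21'}.
rewrite /l01 /l12 /l02 /l21 => -[[[[a b] c] d] H] [[[[a' b'] c'] d'] H'] /= ? ? ? ?; subst.
by rewrite (proof_irrelevance _ H H').
Qed.

Lemma lift_square_base (f : gE (tF T)) k hk : square_base (@lift_square f k hk) = f.
Proof.
move: (square_decomp (lift_square hk)).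
rewrite /l01 /l12 /l02 /l21 /= => -[/(congr1 fst) eq /(congr1 fst) es /(congr1 fst) er /(congr1 fst) ep].
by have [_ [_ Hinj]] := HT; apply: Hinj.
Qed.

Lemma lift_square_index (f : gE (tF T)) k hk : square_index (@lift_square f k hk) = k.
Proof. by []. Qed.

Lemma lift_square_congr (f f' : gE (tF T)) k k' hk hk' :
  f = f' -> k = k' -> @lift_square f k hk = @lift_square f' k' hk'.
Proof. by move=> ef ek; apply: square_ext; rewrite ?lift_square_base ?lift_square_index. Qed.

(* The block of the colour-1 edge whose range is the source of the square at [n]. *)
Definition split_index (x : nat * nat -> gE (tF T)) (n : nat * nat) : nat :=
  tc1 P (qE (x (addN2 (addN2 n (0, 1)) (1, 0)))).

Lemma split_index_lt x : in_shift x -> forall n, split_index x n < tm P (gs (pE (x n))).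
Proof.
move=> Hx n; have [_ ep] := Hx n; have [es _] := Hx (addN2 n (0, 1)).
rewrite /split_index ep s_qE es -r_qE; exact: tc1_lt.
Qed.

Definition to_insplit_fun (xs : {x | @in_shift T x}) (n : nat * nat) : L11 (insplit2 P) :=
  lift_square (split_index_lt (proj2_sig xs) n).

Lemma to_insplit_in_shift xs : @in_shift (T_of (insplit2 P)) (to_insplit_fun xs).
Proof.
case: xs => x Hx n; rewrite /to_insplit_fun /=.
have [es ep] := Hx n; have [_ ep1] := Hx (addN2 n (1, 0)); have [es2 _] := Hx (addN2 n (0, 1)).
by split; apply: val_inj; rewrite /= /split_index; [rewrite es addN2AC ep1 | rewrite ep es2 tc1_qE].
Qed.

Definition to_insplit (xs : {x | @in_shift T x}) : {y | @in_shift (T_of (insplit2 P)) y} :=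
  exist _ (to_insplit_fun xs) (to_insplit_in_shift xs).

Lemma of_insplit_in_shift (ys : {y | @in_shift (T_of (insplit2 P)) y}) :
  @in_shift T (fun n => square_base (proj1_sig ys n)).
Proof.
case: ys => y Hy n /=; have [es ep] := Hy n.
have [_ d12 _ d21] := square_decomp (y n).
have [_ _ d02 _] := square_decomp (y (addN2 n (1, 0))).
have [d01 _ _ _] := square_decomp (y (addN2 n (0, 1))).
move: es ep => /(congr1 val) + /(congr1 val).
by rewrite /= d12 d02 d21 d01 => -[-> _] [-> _].
Qed.

Definition of_insplit (ys : {y | @in_shift (T_of (insplit2 P)) y}) : {x | @in_shift T x} :=
  exist _ (fun n => square_base (proj1_sig ys n)) (of_insplit_in_shift ys).

Lemma conjugate_insplit2 : conjugate T (T_of (insplit2 P)).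
Proof.
exists to_insplit, of_insplit; split; [|split; [|split; [|split]]].
- by move=> x n; exact: lift_square_base.
- move=> [y Hy] n; apply: square_ext; first exact: lift_square_base.
  rewrite lift_square_index /split_index /= addN2AC.
  have [es _] := Hy n; have [_ ep1] := Hy (addN2 n (1, 0)).
  have [_ d12 _ _] := square_decomp (y n).
  have [_ _ d02 d21] := square_decomp (y (addN2 n (1, 0))).
  have [d01 _ _ _] := square_decomp (y (addN2 (addN2 n (1, 0)) (0, 1))).
  move: es ep1 => /(congr1 val) + /(congr1 val).
  by rewrite /= d12 d02 d21 d01 => -[_ ->] [-> _].
- move=> [x Hx] n; exists (n.1 + n.2 + 1) => -[y Hy] /= Hxy.
  apply: lift_square_congr; first by apply: Hxy; lia.
  by congr (tc1 P (qE _)); apply: Hxy; rewrite /addN2 /=; lia.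
- move=> [y Hy] n; exists (n.1 + n.2) => -[y' Hy'] /= Hyy.
  by congr square_base; apply: Hyy; lia.
- move=> m [x Hx] [x' Hx'] /= E n; apply: lift_square_congr; first exact: E.
  by rewrite /= /split_index E (addN2AC (addN2 n (0, 1)) (1, 0) m) (addN2AC n (0, 1) m).
Qed.

Hypotheses (HLR : LR T) (Hess : essential (Lam T)).

Lemma tc2_block_witness (e : gE (tE T)) i :
  i < tm P (gs e) -> exists f : gE (tF T), qE f = e /\ tc2 P (gs f) = i.
Proof.
move=> hi.
have [w [ew ei]] : exists w : gV (tF T), qV w = gs e /\ tc2 P w = i.
  have [[f1 [ef1 ei]] | [w [ew ei]]] := tp_nonempty hi; last by exists w.
  have [_ [_ [[g eg] _]]] := Hess (gs f1).
  have [f [[<- ef] _]] := proj2 HLR g f1 eg.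
  by exists (gr f); rewrite -r_qE -tc1_qE ef.
by have [f [[sf qf] _]] := proj2 HLR w e ew; exists f; rewrite qf sf.
Qed.

Definition part_A : dg_part (tF T) := trivial_part (LR_essential_in_nonempty HLR Hess).

Lemma part_A_index (fj : gE (tF (tinsplit part_A))) : (val fj).2 = 0.
Proof. by case: fj => [[f j] /=]; rewrite ltnS leqn0 => /eqP. Qed.

Definition part_C : dg_part (tF (hat (tinsplit part_A))).
Proof.
refine (@DgPart (tF (hat (tinsplit part_A))) (fun e : gE (tE T) => tm P (gs e))
          (fun fj => tc2 P (gs (val fj).1)) (fun fj => tc2_s_lt (val fj).1) _).
move=> e i /tc2_block_witness [f [<- <-]].
by exists (exist _ (f, 0) isT).
Defined.

Definition relabel (x : gE (tF (hat (tinsplit part_C)))) : L11 (insplit2 P) :=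
  lift_square (valP x).

Definition unrelabel (t : L11 (insplit2 P)) : gE (tF (hat (tinsplit part_C))) :=
  exist _ (exist _ (square_base t, 0) isT, square_index t) (square_index_lt t).

Lemma relabelK : cancel relabel unrelabel.
Proof.
move=> [[[[f i] hi] k] hk]; apply: val_inj; rewrite /= lift_square_base.
congr pair; apply: val_inj => /=.
by rewrite -(part_A_index (exist _ (f, i) hi)).
Qed.

Lemma unrelabelK : cancel unrelabel relabel.
Proof. by move=> t; apply: square_ext; rewrite ?lift_square_base. Qed.

Lemma relabel_bijective : bijective relabel.
Proof. exact: Bijective relabelK unrelabelK. Qed.

Lemma relabel_in_shift (x : nat * nat -> gE (tF (hat (tinsplit part_C)))) :
  in_shift x <-> @in_shift (T_of (insplit2 P)) (relabel \o x).
Proof.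
split=> Hx n.
- have [/(congr1 val) [es _] /(congr1 val) [ep ek]] := Hx n.
  have [_ /(congr1 val) [ep1 _]] := Hx (addN2 n (1, 0)).
  have [/(congr1 val) [es2 _] _] := Hx (addN2 n (0, 1)).
  split; apply: val_inj => /=; last by rewrite ep ek.
  by rewrite es ek es2 -tc1_qE ep1 addN2AC.
- have [/(congr1 val) [es ek] /(congr1 val) [ep ek']] := Hx n.
  by split; apply: val_inj => /=; rewrite ?es ?part_A_index ?ep ?ek'.
Qed.

End InsplitSquares.

Theorem theorem6p1 (T : textile) (HT : textile_system T) (HLR : LR T)
    (Hrf : row_finite (Lam T)) (Hess : essential (Lam T))
    (P : tg_part (Lam T)) :
  exists PA : dg_part (tF T),
    exists PC : dg_part (tF (hat (tinsplit PA))),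
      textile_system (tinsplit PA) /\
      textile_system (hat (tinsplit PA)) /\
      textile_system (tinsplit PC) /\
      textile_system (hat (tinsplit PC)) /\
      (exists phi : gE (tF (hat (tinsplit PC))) -> gE (tF (T_of (insplit2 P))),
          bijective phi /\
          forall x : nat * nat -> gE (tF (hat (tinsplit PC))),
            in_shift x <-> in_shift (phi \o x)) /\
      conjugate T (T_of (insplit2 P)).
Proof.
exists (part_A HLR Hess), (part_C P HT HLR Hess).
have tsA := textile_system_tinsplit (part_A HLR Hess) HT.
have tsC := textile_system_tinsplit (part_C P HT HLR Hess) (textile_system_hat tsA).
split; first exact: tsA.
split; first exact: textile_system_hat tsA.
split; first exact: tsC.
split; first exact: textile_system_hat tsC.
split; last exact: conjugate_insplit2.
by exists (@relabel T P HT HLR Hess); split; [exact: relabel_bijective | exact: relabel_in_shift].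
Qed.
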